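(* Let $ABC$ be a triangle with incenter $I$ and Bevan point $B_e$. Let $A_0, B_0, C_0$ be the points where the $A$-, $B$-, $C$-excircles touch $BC, CA, AB$ respectively, and let $O_0$ be the circumcenter of $A_0B_0C_0$. Let $A', B', C'$ be the feet of the perpendiculars from $B_e$ to $AI, BI, CI$, and let $H'$ be the orthocenter of $A'B'C'$. Then $B_e$, $H'$, $O_0$ are collinear.
   Context: The Bevan point $B_e$ of $ABC$ is the circumcenter of the excentral triangle (the triangle formed by the three excenters of $ABC$). *)

From mathcomp Require Import all_boot all_order all_algebra.
Set Implicit Arguments. Unset Strict Implicit. Unset Printing Implicit Defensive.
Import Order.TTheory GRing.Theory Num.Theory.
Local Open Scope ring_scope.

Section Plane.
Variable R : rcfType.
Definition point := (R * R)%type.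

Definition padd (P Q : point) : point := (P.1 + Q.1, P.2 + Q.2).
Definition psub (P Q : point) : point := (P.1 - Q.1, P.2 - Q.2).
Definition pscale (k : R) (P : point) : point := (k * P.1, k * P.2).
Definition dot (P Q : point) : R := P.1 * Q.1 + P.2 * Q.2.
Definition dist (P Q : point) : R := Num.sqrt (dot (psub P Q) (psub P Q)).

Definition collinear (P Q S : point) : Prop :=
  (Q.1 - P.1) * (S.2 - P.2) - (Q.2 - P.2) * (S.1 - P.1) = 0.

Definition bary (wa wb wc : R) (A B C : point) : point :=
  pscale (wa + wb + wc)^-1
    (padd (pscale wa A) (padd (pscale wb B) (pscale wc C))).

Definition incenter (A B C : point) : point :=
  bary (dist B C) (dist C A) (dist A B) A B C.
Definition excenterA (A B C : point) : point :=
  bary (- dist B C) (dist C A) (dist A B) A B C.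
Definition excenterB (A B C : point) : point :=
  bary (dist B C) (- dist C A) (dist A B) A B C.
Definition excenterC (A B C : point) : point :=
  bary (dist B C) (dist C A) (- dist A B) A B C.

Definition is_circumcenter (O P Q S : point) : Prop :=
  dist O P = dist O Q /\ dist O Q = dist O S.

Definition is_bevan_point (Be A B C : point) : Prop :=
  is_circumcenter Be (excenterA A B C) (excenterB A B C) (excenterC A B C).

Definition is_foot (F P X Y : point) : Prop :=
  collinear X Y F /\ dot (psub P F) (psub Y X) = 0.

Definition is_orthocenter (H P Q S : point) : Prop :=
  dot (psub H P) (psub Q S) = 0 /\ dot (psub H Q) (psub S P) = 0 /\
  dot (psub H S) (psub P Q) = 0.
End Plane.

(* Everything in the statement is preserved by similarities, and every triangle
   is similar to one whose incircle is the unit circle centred at the origin and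
   whose side BC lies on the line y = -1.  Such a triangle is determined by the
   cotangents u, v of its half angles at B and C, and all the points of the
   statement have rational coordinates in u and v; for instance
   Be = (v - u, (3 + u^2 + v^2 - u^2 v^2) / (2 (uv - 1))) and
   H' = ((2u - 2v - u^2 v + u v^2) / (uv - 1), (3 - uv) / (uv - 1)).
   The collinearity of Be, H', O0 is then a rational identity.  For the
   equilateral triangle A'B'C' collapses to the incenter and H' is not determined,
   but there O0 = Be. *)

From mathcomp Require Import all_boot all_order all_algebra.
From mathcomp Require Import ring lra.
Import Order.TTheory GRing.Theory Num.Theory.
Set Implicit Arguments.
Unset Strict Implicit.
Local Open Scope ring_scope.

Local Ltac neq0 := repeat match goal with
  | |- is_true (_ && _) => apply/andP; split
  | |- is_true (_ * _ != 0) => apply: mulf_neq0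
  | |- is_true (_ ^+ _ != 0) => apply: expf_neq0
  | |- is_true (- _ != 0) => rewrite oppr_eq0
  | |- is_true (_^-1 != 0) => rewrite invr_eq0
  | |- _ => by rewrite ?pnatr_eq0
  end.

Section PlaneGeometry.
Variable R : rcfType.
Implicit Types (A B C F H O P Q S X Y Z : point R) (a b c : R).

Definition sqdist X Y : R := dot (psub X Y) (psub X Y).

Definition area2 P Q S : R := (Q.1 - P.1) * (S.2 - P.2) - (Q.2 - P.2) * (S.1 - P.1).

Lemma collinearP P Q S : reflect (collinear P Q S) (area2 P Q S == 0).
Proof. exact: eqP. Qed.

Lemma not_collinear_area2 P Q S k : area2 P Q S = k -> k != 0 -> ~ collinear P Q S.
Proof. by move=> <- /eqP. Qed.

Lemma point_eq X Y : X.1 = Y.1 -> X.2 = Y.2 -> X = Y.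
Proof. by case: X Y => [x1 x2] [y1 y2] /= -> ->. Qed.

Lemma point_neq1 X Y : X.1 != Y.1 -> X != Y.
Proof. by apply: contra_neq => ->. Qed.

Lemma point_neq2 X Y : X.2 != Y.2 -> X != Y.
Proof. by apply: contra_neq => ->. Qed.

Lemma sqr1D_gt0 (x : R) : 0 < 1 + x ^+ 2.
Proof. by rewrite ltr_pwDl ?sqr_ge0. Qed.

Lemma sqdist_ge0 X Y : 0 <= sqdist X Y.
Proof. by rewrite /sqdist /dot; nra. Qed.

Lemma sqr_dist X Y : dist X Y ^+ 2 = sqdist X Y.
Proof. exact/sqr_sqrtr/sqdist_ge0. Qed.

Lemma dist_ge0 X Y : 0 <= dist X Y.
Proof. exact: sqrtr_ge0. Qed.

Lemma distE X Y : dist X Y = Num.sqrt (sqdist X Y).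
Proof. by []. Qed.

Lemma eq_dist X Y Z : (dist X Y = dist X Z) <-> (sqdist X Y = sqdist X Z).
Proof. by rewrite !distE; split=> [/eqP|->//]; rewrite eqr_sqrt ?sqdist_ge0 // => /eqP. Qed.

Lemma is_circumcenterE O P Q S :
  is_circumcenter O P Q S <-> sqdist O P = sqdist O Q /\ sqdist O Q = sqdist O S.
Proof. by rewrite /is_circumcenter !eq_dist. Qed.

Lemma sqdistC X Y : sqdist X Y = sqdist Y X.
Proof. by rewrite /sqdist /dot /psub /=; ring. Qed.

Lemma sqdist_eq0 X Y : (sqdist X Y == 0) = (X == Y).
Proof.
rewrite /sqdist /dot paddr_eq0 ?sqr_ge0 // -!expr2 !sqrf_eq0 !subr_eq0.
by case: X Y => [x1 x2] [y1 y2]; rewrite xpair_eqE.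
Qed.

Lemma eq_point_lin2 (a1 b1 a2 b2 : R) X Y : a1 * b2 - a2 * b1 != 0 ->
  a1 * (X.1 - Y.1) + b1 * (X.2 - Y.2) = 0 ->
  a2 * (X.1 - Y.1) + b2 * (X.2 - Y.2) = 0 -> X = Y.
Proof.
move=> det0 e1 e2.
have cramer (d : R) : d * (a1 * b2 - a2 * b1) = 0 -> d = 0.
  by move/eqP; rewrite mulf_eq0 (negbTE det0) orbF => /eqP.
apply: point_eq; apply/eqP; rewrite -subr_eq0; apply/eqP; apply: cramer.
- transitivity (b2 * (a1 * (X.1 - Y.1) + b1 * (X.2 - Y.2))
                - b1 * (a2 * (X.1 - Y.1) + b2 * (X.2 - Y.2))); first by ring.
  by rewrite e1 e2; ring.
- transitivity (a1 * (a2 * (X.1 - Y.1) + b2 * (X.2 - Y.2))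
                - a2 * (a1 * (X.1 - Y.1) + b1 * (X.2 - Y.2))); first by ring.
  by rewrite e1 e2; ring.
Qed.

Lemma circumcenter_unique O O' P Q S : ~ collinear P Q S ->
  is_circumcenter O P Q S -> is_circumcenter O' P Q S -> O = O'.
Proof.
move=> /collinearP PQS /is_circumcenterE[OP OQ] /is_circumcenterE[O'P O'Q].
apply: (@eq_point_lin2 (2 * (Q.1 - P.1)) (2 * (Q.2 - P.2)) (2 * (S.1 - Q.1)) (2 * (S.2 - Q.2))).
- rewrite (_ : _ - _ = 4 * area2 P Q S) ?mulf_neq0 ?pnatr_eq0 //.
  by rewrite /area2; ring.
- transitivity ((sqdist O P - sqdist O Q) - (sqdist O' P - sqdist O' Q)).
    by rewrite /sqdist /dot /psub /=; ring.
  by rewrite OP O'P !subrr.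
- transitivity ((sqdist O Q - sqdist O S) - (sqdist O' Q - sqdist O' S)).
    by rewrite /sqdist /dot /psub /=; ring.
  by rewrite OQ O'Q !subrr.
Qed.

Lemma foot_unique F F' P X Y : X != Y -> is_foot F P X Y -> is_foot F' P X Y -> F = F'.
Proof.
rewrite -sqdist_eq0 => XY [/collinearP/eqP XYF PF] [/collinearP/eqP XYF' PF'].
apply: (@eq_point_lin2 (X.2 - Y.2) (Y.1 - X.1) (Y.1 - X.1) (Y.2 - X.2)).
- by rewrite (_ : _ - _ = - sqdist X Y) ?oppr_eq0 //; rewrite /sqdist /dot /psub /=; ring.
- transitivity (area2 X Y F - area2 X Y F'); first by rewrite /area2; ring.
  by rewrite XYF XYF' subrr.
- transitivity (dot (psub P F') (psub Y X) - dot (psub P F) (psub Y X)).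
    by rewrite /dot /psub /=; ring.
  by rewrite PF PF' subrr.
Qed.

Lemma orthocenter_unique H H' P Q S : ~ collinear P Q S ->
  is_orthocenter H P Q S -> is_orthocenter H' P Q S -> H = H'.
Proof.
move=> /collinearP PQS [HP [HQ _]] [H'P [H'Q _]].
apply: (@eq_point_lin2 (Q.1 - S.1) (Q.2 - S.2) (S.1 - P.1) (S.2 - P.2)).
- by rewrite (_ : _ - _ = area2 P Q S) //; rewrite /area2; ring.
- transitivity (dot (psub H P) (psub Q S) - dot (psub H' P) (psub Q S)).
    by rewrite /dot /psub /=; ring.
  by rewrite HP H'P subrr.
- transitivity (dot (psub H Q) (psub S P) - dot (psub H' Q) (psub S P)).
    by rewrite /dot /psub /=; ring.
  by rewrite HQ H'Q subrr.
Qed.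

Lemma eq_point_sqdist_area2 P A B C : B != C ->
  sqdist P B = sqdist A B -> sqdist P C = sqdist A C -> area2 P B C = area2 A B C -> P = A.
Proof.
rewrite -sqdist_eq0 => BC PB PC PBC.
apply: (@eq_point_lin2 (2 * (C.1 - B.1)) (2 * (C.2 - B.2)) (B.2 - C.2) (C.1 - B.1)).
- rewrite (_ : _ - _ = 2 * sqdist B C) ?mulf_neq0 ?pnatr_eq0 //.
  by rewrite /sqdist /dot /psub /=; ring.
- transitivity ((sqdist P B - sqdist A B) - (sqdist P C - sqdist A C)).
    by rewrite /sqdist /dot /psub /=; ring.
  by rewrite PB PC !subrr.
- transitivity (area2 P B C - area2 A B C); first by rewrite /area2; ring.
  by rewrite PBC subrr.
Qed.

Lemma bary_scale (k wa wb wc : R) A B C : k != 0 -> wa + wb + wc != 0 ->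
  bary (k * wa) (k * wb) (k * wc) A B C = bary wa wb wc A B C.
Proof.
move=> k0 w0; have kw0 : k * wa + k * wb + k * wc != 0 by rewrite -!mulrDr mulf_neq0.
by apply: point_eq; rewrite /bary /pscale /padd /=; field; rewrite w0 kw0.
Qed.

Lemma heron A B C :
  4 * area2 A B C ^+ 2 =
  (dist B C + dist C A + dist A B) * (- dist B C + dist C A + dist A B) *
  (dist B C - dist C A + dist A B) * (dist B C + dist C A - dist A B).
Proof.
have -> : forall a b c : R, (a + b + c) * (- a + b + c) * (a - b + c) * (a + b - c) =
    2 * a^+2 * b^+2 + 2 * b^+2 * c^+2 + 2 * c^+2 * a^+2 - (a^+2)^+2 - (b^+2)^+2 - (c^+2)^+2.
  by move=> a b c; ring.
by rewrite !sqr_dist /sqdist /area2 /dot /psub /=; ring.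
Qed.

Lemma heron_factor_gt0 a b c : 0 <= a -> 0 <= b -> 0 <= c ->
  0 < (a + b + c) * (- a + b + c) * (a - b + c) * (a + b - c) -> 0 < - a + b + c.
Proof.
move=> a0 b0 c0; apply: contraTT; rewrite -!leNgt => ha.
rewrite (_ : _ * _ = (a + b + c) * (a - b + c) * (a + b - c) * (- a + b + c)); last by ring.
by apply: mulr_ge0_le0 => //; apply: mulr_ge0; [apply: mulr_ge0|]; lra.
Qed.

Lemma triangle_ineqs A B C : ~ collinear A B C ->
  [/\ 0 < dist B C + dist C A + dist A B, 0 < - dist B C + dist C A + dist A B,
      0 < dist B C - dist C A + dist A B & 0 < dist B C + dist C A - dist A B].
Proof.
move=> /collinearP ABC.
have := dist_ge0 B C; have := dist_ge0 C A; have := dist_ge0 A B.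
have := heron A B C; move: (dist B C) (dist C A) (dist A B) => a b c hprod c0 b0 a0.
have pos : 0 < (a + b + c) * (- a + b + c) * (a - b + c) * (a + b - c).
  by rewrite -hprod mulr_gt0 // exprn_even_gt0.
have ha : 0 < - a + b + c by apply: heron_factor_gt0.
have hb : 0 < - b + c + a.
  apply: heron_factor_gt0 => //.
  suff -> : (b + c + a) * (- b + c + a) * (b - c + a) * (b + c - a) =
            (a + b + c) * (- a + b + c) * (a - b + c) * (a + b - c) by [].
  by ring.
have hc : 0 < - c + a + b.
  apply: heron_factor_gt0 => //.
  suff -> : (c + a + b) * (- c + a + b) * (c - a + b) * (c + a - b) =
            (a + b + c) * (- a + b + c) * (a - b + c) * (a + b - c) by [].
  by ring.
split; lra.
Qed.

Definition bevan_collinear A B C : Prop :=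
  forall Be A0 B0 C0 O0 A' B' C' H' : point R,
  is_bevan_point Be A B C ->
  is_foot A0 (excenterA A B C) B C ->
  is_foot B0 (excenterB A B C) C A ->
  is_foot C0 (excenterC A B C) A B ->
  is_circumcenter O0 A0 B0 C0 ->
  is_foot A' Be A (incenter A B C) ->
  is_foot B' Be B (incenter A B C) ->
  is_foot C' Be C (incenter A B C) ->
  is_orthocenter H' A' B' C' ->
  collinear Be H' O0.

(* The map X |-> T + X.1 (p, q) + X.2 (-1)^b (-q, p): a similarity of ratio
   sqrt (p^2 + q^2), orientation-reversing when b is true. *)
Definition similarity (T : point R) (p q : R) (b : bool) (X : point R) : point R :=
  (T.1 + p * X.1 - (-1) ^+ b * q * X.2, T.2 + q * X.1 + (-1) ^+ b * p * X.2).

Definition similarity_inv (T : point R) (p q : R) (b : bool) (Y : point R) : point R :=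
  ((p * (Y.1 - T.1) + q * (Y.2 - T.2)) / (p ^+ 2 + q ^+ 2),
   (-1) ^+ b * (p * (Y.2 - T.2) - q * (Y.1 - T.1)) / (p ^+ 2 + q ^+ 2)).

Section Similarity.
Variables (T : point R) (p q : R) (b : bool).
Hypothesis pq_neq0 : p ^+ 2 + q ^+ 2 != 0.
Local Notation S := (similarity T p q b).

Lemma similarityK : cancel (similarity_inv T p q b) S.
Proof. by move=> Y; case: b; apply: point_eq; rewrite /similarity_inv /=; field. Qed.

Lemma dot_similarity X Y Z W :
  dot (psub (S X) (S Y)) (psub (S Z) (S W)) = (p ^+ 2 + q ^+ 2) * dot (psub X Y) (psub Z W).
Proof. by case: b; rewrite /dot /psub /=; ring. Qed.

Lemma sqdist_similarity X Y : sqdist (S X) (S Y) = (p ^+ 2 + q ^+ 2) * sqdist X Y.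
Proof. exact: dot_similarity. Qed.

Lemma dist_similarity X Y : dist (S X) (S Y) = Num.sqrt (p ^+ 2 + q ^+ 2) * dist X Y.
Proof. by rewrite !distE sqdist_similarity sqrtrM // addr_ge0 ?sqr_ge0. Qed.

Lemma area2_similarity X Y Z :
  area2 (S X) (S Y) (S Z) = (-1) ^+ b * (p ^+ 2 + q ^+ 2) * area2 X Y Z.
Proof. by case: b; rewrite /area2 /=; ring. Qed.

Lemma collinear_similarity X Y Z : collinear (S X) (S Y) (S Z) <-> collinear X Y Z.
Proof.
split=> /collinearP XYZ; apply/collinearP; move: XYZ;
  by rewrite area2_similarity !mulf_eq0 signr_eq0 (negbTE pq_neq0).
Qed.

Lemma bary_similarity wa wb wc A B C : wa + wb + wc != 0 ->
  S (bary wa wb wc A B C) = bary wa wb wc (S A) (S B) (S C).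
Proof.
by move=> w0; case: b; apply: point_eq; rewrite /bary /pscale /padd /=; field; rewrite w0.
Qed.

Lemma centers_similarity A B C : ~ collinear A B C ->
  [/\ incenter (S A) (S B) (S C) = S (incenter A B C),
      excenterA (S A) (S B) (S C) = S (excenterA A B C),
      excenterB (S A) (S B) (S C) = S (excenterB A B C) &
      excenterC (S A) (S B) (S C) = S (excenterC A B C)].
Proof.
move=> /triangle_ineqs[s0 sa sb sc].
have k0 : Num.sqrt (p ^+ 2 + q ^+ 2) != 0.
  by rewrite sqrtr_eq0 -ltNge lt_def pq_neq0 addr_ge0 ?sqr_ge0.
rewrite /incenter /excenterA /excenterB /excenterC !dist_similarity -!mulrN.
by rewrite !bary_scale ?bary_similarity // ?gt_eqF.
Qed.

Lemma foot_similarity F P X Y : is_foot (S F) (S P) (S X) (S Y) <-> is_foot F P X Y.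
Proof.
rewrite /is_foot collinear_similarity dot_similarity.
split=> -[XYF PF]; split=> //; last by rewrite PF mulr0.
by move/eqP: PF; rewrite mulf_eq0 (negbTE pq_neq0) => /eqP.
Qed.

Lemma circumcenter_similarity O P Q X :
  is_circumcenter (S O) (S P) (S Q) (S X) <-> is_circumcenter O P Q X.
Proof.
rewrite !is_circumcenterE !sqdist_similarity; have kK := mulfI pq_neq0.
by split=> -[e1 e2]; split; rewrite ?e1 ?e2 //; [exact: kK e1 | exact: kK e2].
Qed.

Lemma orthocenter_similarity H P Q X :
  is_orthocenter (S H) (S P) (S Q) (S X) <-> is_orthocenter H P Q X.
Proof.
rewrite /is_orthocenter !dot_similarity; have kK := mulfI pq_neq0.
split=> -[e1 [e2 e3]]; last by rewrite e1 e2 e3 !mulr0.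
by split; [|split]; apply: kK; rewrite mulr0.
Qed.

Lemma bevan_collinear_similarity A B C : ~ collinear A B C ->
  bevan_collinear A B C -> bevan_collinear (S A) (S B) (S C).
Proof.
move=> ABC BeABC Be A0 B0 C0 O0 A' B' C' H'; have SK := similarityK.
rewrite -[Be]SK -[A0]SK -[B0]SK -[C0]SK -[O0]SK -[A']SK -[B']SK -[C']SK -[H']SK.
rewrite /is_bevan_point; have [-> -> -> ->] := centers_similarity ABC.
rewrite !circumcenter_similarity !foot_similarity.
by rewrite orthocenter_similarity collinear_similarity; apply: BeABC.
Qed.

End Similarity.

(* The triangle whose incircle is the unit circle centred at the origin and whose
   side BC lies on the line y = -1: u and v are the tangent lengths from B and C,
   i.e. cot (B/2) and cot (C/2), and uv > 1 says that B/2 + C/2 < pi/2. *)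
Section CanonicalTriangle.
Variables u v : R.
Hypotheses (u_gt0 : 0 < u) (v_gt0 : 0 < v) (uv_gt1 : 1 < u * v).

Definition canonA : point R := ((u - v) / (u * v - 1), (u * v + 1) / (u * v - 1)).
Definition canonB : point R := (- u, -1).
Definition canonC : point R := (v, -1).
Definition canonIa : point R := (v - u, - (1 + u * v)).
Definition canonIb : point R := (u * (1 + v ^+ 2) / (u * v - 1), (1 + v ^+ 2) / (u * v - 1)).
Definition canonIc : point R := (- (v * (1 + u ^+ 2)) / (u * v - 1), (1 + u ^+ 2) / (u * v - 1)).
Definition canonBe : point R := (v - u, (3 + u ^+ 2 + v ^+ 2 - u ^+ 2 * v ^+ 2) / (2 * (u * v - 1))).
Definition canonA0 : point R := (v - u, -1).
Definition canonB0 : point R :=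
  ((u - 2 * v ^+ 3 + u * v ^+ 4) / ((u * v - 1) * (1 + v ^+ 2)),
   (1 + u * v + 3 * v ^+ 2 - u * v ^+ 3) / ((u * v - 1) * (1 + v ^+ 2))).
Definition canonC0 : point R :=
  ((2 * u ^+ 3 - v - u ^+ 4 * v) / ((u * v - 1) * (1 + u ^+ 2)),
   (1 + 3 * u ^+ 2 + u * v - u ^+ 3 * v) / ((u * v - 1) * (1 + u ^+ 2))).
Definition canonO0 : point R :=
  ((- 3 * u + u ^+ 3 + 3 * v + 7 * u ^+ 2 * v - 7 * u * v ^+ 2 - 3 * u ^+ 3 * v ^+ 2
    - v ^+ 3 + 3 * u ^+ 2 * v ^+ 3) / (4 * (u * v - 1) ^+ 2),
   (- 9 - 2 * u ^+ 2 - u ^+ 4 + 10 * u * v + 2 * u ^+ 3 * v - 2 * v ^+ 2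
    + 6 * u ^+ 2 * v ^+ 2 + 2 * u * v ^+ 3 - 6 * u ^+ 3 * v ^+ 3 - v ^+ 4
    + u ^+ 4 * v ^+ 4) / (8 * (u * v - 1) ^+ 2)).
Definition canonA' : point R :=
  ((3 * u - 3 * v - u ^+ 2 * v + u * v ^+ 2) / (2 * (u * v - 1)),
   (3 + 2 * u * v - u ^+ 2 * v ^+ 2) / (2 * (u * v - 1))).
Definition canonB' : point R :=
  ((3 * u - 2 * u ^+ 2 * v + u * v ^+ 2) / (2 * (u * v - 1)),
   (3 - 2 * u * v + v ^+ 2) / (2 * (u * v - 1))).
Definition canonC' : point R :=
  ((- 3 * v - u ^+ 2 * v + 2 * u * v ^+ 2) / (2 * (u * v - 1)),
   (3 + u ^+ 2 - 2 * u * v) / (2 * (u * v - 1))).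
Definition canonH' : point R :=
  ((2 * u - 2 * v - u ^+ 2 * v + u * v ^+ 2) / (u * v - 1), (3 - u * v) / (u * v - 1)).

Let u_neq0 : u != 0. Proof. exact: lt0r_neq0. Qed.
Let v_neq0 : v != 0. Proof. exact: lt0r_neq0. Qed.
Let uv_gt0 : 0 < u + v. Proof. exact: addr_gt0. Qed.
Let uv_neq0 : u + v != 0. Proof. exact: lt0r_neq0. Qed.
Let uv1_gt0 : 0 < u * v - 1. Proof. by rewrite subr_gt0. Qed.
Let uv1_neq0 : u * v - 1 != 0. Proof. exact: lt0r_neq0. Qed.
Let u2_neq0 : 1 + u ^+ 2 != 0. Proof. exact/lt0r_neq0/sqr1D_gt0. Qed.
Let v2_neq0 : 1 + v ^+ 2 != 0. Proof. exact/lt0r_neq0/sqr1D_gt0. Qed.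
Let canonA2_gt0 : 0 < canonA.2. Proof. by rewrite divr_gt0 // addr_gt0 // mulr_gt0. Qed.
Let canonA2_gtN1 : -1 < canonA.2. Proof. exact: lt_trans (ltrN10 R) canonA2_gt0. Qed.

Lemma canon_dist :
  [/\ dist canonB canonC = u + v,
      dist canonC canonA = u * (1 + v ^+ 2) / (u * v - 1) &
      dist canonA canonB = v * (1 + u ^+ 2) / (u * v - 1)].
Proof.
have dist_of X Y l : 0 <= l -> sqdist X Y = l ^+ 2 -> dist X Y = l.
  by move=> l0 XY; rewrite distE XY sqrtr_sqr ger0_norm.
split; apply: dist_of; rewrite ?ltW ?divr_gt0 ?mulr_gt0 ?sqr1D_gt0 //;
  by rewrite /sqdist /dot /psub /=; field.
Qed.

Lemma canon_area2 : area2 canonA canonB canonC = 2 * u * v * (u + v) / (u * v - 1).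
Proof. by rewrite /area2 /=; field. Qed.

Lemma canon_not_collinear : ~ collinear canonA canonB canonC.
Proof. by apply: not_collinear_area2 canon_area2 _; neq0. Qed.

Lemma canon_centers :
  [/\ incenter canonA canonB canonC = (0, 0), excenterA canonA canonB canonC = canonIa,
      excenterB canonA canonB canonC = canonIb & excenterC canonA canonB canonC = canonIc].
Proof.
have [dBC dCA dAB] := canon_dist.
rewrite /incenter /excenterA /excenterB /excenterC dBC dCA dAB.
have pos_neq0 (x k : R) : x = k -> 0 < k -> x != 0 by move=> -> /lt0r_neq0.
have s0 : (u + v) * (u * v - 1) + u * (1 + v ^+ 2) + v * (1 + u ^+ 2) != 0.
  by apply: (pos_neq0 _ (2 * u * v * (u + v))); rewrite ?mulr_gt0 //; ring.
have sa : - (u + v) * (u * v - 1) + u * (1 + v ^+ 2) + v * (1 + u ^+ 2) != 0.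
  by apply: (pos_neq0 _ (2 * (u + v))); rewrite ?mulr_gt0 //; ring.
have sb : (u + v) * (u * v - 1) - u * (1 + v ^+ 2) + v * (1 + u ^+ 2) != 0.
  by apply: (pos_neq0 _ (2 * u * (u * v - 1))); rewrite ?mulr_gt0 //; ring.
have sc : (u + v) * (u * v - 1) + u * (1 + v ^+ 2) - v * (1 + u ^+ 2) != 0.
  by apply: (pos_neq0 _ (2 * v * (u * v - 1))); rewrite ?mulr_gt0 //; ring.
by split; apply: point_eq; rewrite /bary /pscale /padd /=; field; neq0.
Qed.

Lemma canon_bevan_point Be : is_circumcenter Be canonIa canonIb canonIc -> Be = canonBe.
Proof.
move=> BeIabc; apply: (circumcenter_unique _ BeIabc).
  apply: (@not_collinear_area2 _ _ _
    (u * v * (u + v) * (1 + u ^+ 2) * (1 + v ^+ 2) / (u * v - 1) ^+ 2)).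
    by rewrite /area2 /=; field; neq0.
  by neq0.
by apply/is_circumcenterE; rewrite /sqdist /dot /psub /=; split; field; neq0.
Qed.

Lemma canon_touchA A0 : is_foot A0 canonIa canonB canonC -> A0 = canonA0.
Proof.
move=> A0foot; apply: (foot_unique _ A0foot).
  by apply: point_neq1; rewrite /= lt_eqF // (@lt_trans _ _ 0) // oppr_lt0.
by split; rewrite /collinear /dot /psub /=; ring.
Qed.

Lemma canon_touchB B0 : is_foot B0 canonIb canonC canonA -> B0 = canonB0.
Proof.
move=> B0foot; apply: (foot_unique _ B0foot); first by apply: point_neq2; rewrite lt_eqF.
by split; rewrite /collinear /dot /psub /=; field; neq0.
Qed.

Lemma canon_touchC C0 : is_foot C0 canonIc canonA canonB -> C0 = canonC0.
Proof.
move=> C0foot; apply: (foot_unique _ C0foot); first by apply: point_neq2; rewrite gt_eqF.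
by split; rewrite /collinear /dot /psub /=; field; neq0.
Qed.

Lemma canon_touch_circumcenter O0 :
  is_circumcenter O0 canonA0 canonB0 canonC0 -> O0 = canonO0.
Proof.
move=> O0A0B0C0; apply: (circumcenter_unique _ O0A0B0C0).
  apply: (@not_collinear_area2 _ _ _ (4 * u * v * (u + v) / ((1 + u ^+ 2) * (1 + v ^+ 2)))).
    by rewrite /area2 /=; field; neq0.
  by neq0.
by apply/is_circumcenterE; rewrite /sqdist /dot /psub /=; split; field; neq0.
Qed.

Lemma canon_footA A' : is_foot A' canonBe canonA (0, 0) -> A' = canonA'.
Proof.
move=> A'foot; apply: (foot_unique _ A'foot); first by apply: point_neq2; rewrite gt_eqF.
by split; rewrite /collinear /dot /psub /=; field; neq0.
Qed.

Lemma canon_footB B' : is_foot B' canonBe canonB (0, 0) -> B' = canonB'.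
Proof.
move=> B'foot; apply: (foot_unique _ B'foot); first by apply: point_neq2; rewrite /= oppr_eq0 oner_eq0.
by split; rewrite /collinear /dot /psub /=; field; neq0.
Qed.

Lemma canon_footC C' : is_foot C' canonBe canonC (0, 0) -> C' = canonC'.
Proof.
move=> C'foot; apply: (foot_unique _ C'foot); first by apply: point_neq2; rewrite /= oppr_eq0 oner_eq0.
by split; rewrite /collinear /dot /psub /=; field; neq0.
Qed.

Lemma canon_orthocenter H' : (u * v - 3) ^+ 2 + (u - v) ^+ 2 != 0 ->
  is_orthocenter H' canonA' canonB' canonC' -> H' = canonH'.
Proof.
move=> nonequi H'A'B'C'; apply: (orthocenter_unique _ H'A'B'C').
  apply: (@not_collinear_area2 _ _ _
    (- (u * v * (u + v) * ((u * v - 3) ^+ 2 + (u - v) ^+ 2)) / (4 * (u * v - 1) ^+ 2))).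
    by rewrite /area2 /=; field; neq0.
  by neq0.
by rewrite /is_orthocenter /dot /psub /=; split; [|split]; field; neq0.
Qed.

(* u = v = sqrt 3 is the equilateral triangle, where A' = B' = C' = I and H' is
   arbitrary; the statement then holds because O0 = Be. *)
Lemma canon_equilateral : (u * v - 3) ^+ 2 + (u - v) ^+ 2 = 0 -> canonO0 = canonBe.
Proof.
move/eqP; rewrite paddr_eq0 ?sqr_ge0 // !sqrf_eq0 !subr_eq0 => /andP[/eqP uv3 /eqP vu].
have uu1 : u * u - 1 != 0 by rewrite {2}vu.
rewrite -vu in uv3; apply: point_eq; rewrite /canonO0 /canonBe /= -vu; first by field; neq0.
apply/eqP; rewrite -subr_eq0; apply/eqP.
transitivity ((u * u - 3) * ((u ^+ 6 - 3 * u ^+ 4 - u ^+ 2 + 3 + 4 * (u ^+ 2 + 1) * (u * u - 1))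
                             / (8 * (u * u - 1) ^+ 2))).
  by field; neq0.
by rewrite uv3 subrr mul0r.
Qed.

Lemma canon_collinear : collinear canonBe canonH' canonO0.
Proof. by rewrite /collinear /=; field; neq0. Qed.

Lemma canon_bevan_collinear : bevan_collinear canonA canonB canonC.
Proof.
move=> Be A0 B0 C0 O0 A' B' C' H'; rewrite /is_bevan_point.
have [-> -> -> ->] := canon_centers.
move=> /canon_bevan_point -> /canon_touchA -> /canon_touchB -> /canon_touchC ->.
move=> /canon_touch_circumcenter -> /canon_footA -> /canon_footB -> /canon_footC ->.
have [/eqP equi _ | nonequi /(canon_orthocenter nonequi) ->] :=
  boolP ((u * v - 3) ^+ 2 + (u - v) ^+ 2 == 0).
  by rewrite (canon_equilateral equi) /collinear; ring.
exact: canon_collinear.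
Qed.

End CanonicalTriangle.

(* With tangent lengths x = s - a, y = s - b, z = s - c and inradius r, Heron's
   formula reads r^2 s = x y z; then u = y / r and v = z / r satisfy
   x (u v - 1) = r (u + v), and the sides and area of ABC are those of the
   canonical triangle scaled by r. *)
Lemma canon_shape A B C : ~ collinear A B C -> exists r u v : R,
  [/\ 0 < r, 0 < u, 0 < v & 1 < u * v] /\
  [/\ dist B C = r * dist (canonB u) (canonC v),
      dist C A = r * dist (canonC v) (canonA u v),
      dist A B = r * dist (canonA u v) (canonB u) &
      `|area2 A B C| = r ^+ 2 * area2 (canonA u v) (canonB u) (canonC v)].
Proof.
move=> ABC; have area_neq0 : area2 A B C != 0 by apply/collinearP.
move: (triangle_ineqs ABC) (heron A B C).
set a := dist B C; set b := dist C A; set c := dist A B.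
move=> [s_gt0 x_gt0 y_gt0 z_gt0] heronABC.
pose r := `|area2 A B C| / (a + b + c).
pose u := (a - b + c) / (2 * r); pose v := (a + b - c) / (2 * r).
have r_gt0 : 0 < r by rewrite divr_gt0 ?normr_gt0.
have [s0 r0] : a + b + c != 0 /\ r != 0 by rewrite !lt0r_neq0.
have heron_r : 4 * r ^+ 2 * (a + b + c) = (- a + b + c) * (a - b + c) * (a + b - c).
  apply: (mulfI s0); rewrite /r expr_div_n real_normK ?num_real //.
  transitivity (4 * area2 A B C ^+ 2); first by field.
  by rewrite heronABC; ring.
have xuv : (- a + b + c) / 2 * (u * v) = (a + b + c) / 2.
  transitivity ((- a + b + c) * (a - b + c) * (a + b - c) / (8 * r ^+ 2)); first by rewrite /u /v; field.
  by rewrite -heron_r; field.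
have xuv1 : (- a + b + c) / 2 * (u * v - 1) = a by rewrite mulrBr mulr1 xuv; field.
have uv_gt1 : 1 < u * v.
  by rewrite -subr_gt0 -(@pmulr_rgt0 _ ((- a + b + c) / 2)) ?xuv1 ?divr_gt0 //; lra.
have u_gt0 : 0 < u by rewrite /u divr_gt0 // mulr_gt0 // ltr0n.
have v_gt0 : 0 < v by rewrite /v divr_gt0 // mulr_gt0 // ltr0n.
have uv1 : u * v - 1 != 0 by rewrite lt0r_neq0 // subr_gt0.
have ruv : r * (u + v) = a by rewrite /u /v; field.
have x_eq : (- a + b + c) / 2 = r * (u + v) / (u * v - 1).
  by apply: (mulIf uv1); rewrite xuv1 divfK // ruv.
exists r, u, v; split=> //; have [-> -> ->] := canon_dist u_gt0 v_gt0 uv_gt1.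
rewrite canon_area2 //; split; first by rewrite ruv.
- transitivity (r * v + (- a + b + c) / 2); first by rewrite /v; field.
  by rewrite x_eq; field; neq0; rewrite lt0r_neq0 ?sqr1D_gt0.
- transitivity (r * u + (- a + b + c) / 2); first by rewrite /u; field.
  by rewrite x_eq; field; neq0; rewrite lt0r_neq0 ?sqr1D_gt0.
- transitivity (2 * r * ((- a + b + c) / 2 * (u * v))); first by rewrite xuv /r; field.
  by rewrite x_eq; field.
Qed.

Lemma similar_to_canon A B C : ~ collinear A B C ->
  exists T (p q : R) (b : bool) (u v : R),
  [/\ p ^+ 2 + q ^+ 2 != 0, 0 < u, 0 < v & 1 < u * v] /\
  [/\ similarity T p q b (canonA u v) = A, similarity T p q b (canonB u) = B &
      similarity T p q b (canonC v) = C].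
Proof.
move=> ABC; have [r [u [v [[r_gt0 u_gt0 v_gt0 uv_gt1] [dBC dCA dAB area]]]]] := canon_shape ABC.
have [cBC _ _] := canon_dist u_gt0 v_gt0 uv_gt1.
have uv0 : u + v != 0 by rewrite lt0r_neq0 ?addr_gt0.
pose p := (C.1 - B.1) / (u + v); pose q := (C.2 - B.2) / (u + v).
pose b := area2 A B C < 0; pose T := (B.1 + p * u - (-1) ^+ b * q, B.2 + q * u + (-1) ^+ b * p).
have pq : p ^+ 2 + q ^+ 2 = r ^+ 2.
  transitivity (sqdist B C / (u + v) ^+ 2); first by rewrite /p /q /sqdist /dot /psub /=; field.
  by rewrite -sqr_dist dBC cBC; field.
have pq0 : p ^+ 2 + q ^+ 2 != 0 by rewrite pq expf_neq0 ?lt0r_neq0.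
have SB : similarity T p q b (canonB u) = B by apply: point_eq; rewrite /= /p /q; field.
have SC : similarity T p q b (canonC v) = C by apply: point_eq; rewrite /= /p /q; field.
exists T, p, q, b, u, v.
do 2!split=> //; apply: (@eq_point_sqdist_area2 _ _ B C).
- by rewrite -sqdist_eq0 -sqr_dist dBC cBC expf_neq0 // mulf_neq0 // lt0r_neq0.
- by rewrite -{1}SB sqdist_similarity pq -!sqr_dist dAB exprMn.
- by rewrite -{1}SC sqdist_similarity pq sqdistC [sqdist A C]sqdistC -!sqr_dist dCA exprMn.
- by rewrite -{1}SB -{1}SC area2_similarity pq -mulrA -area [RHS]numEsign.
Qed.

End PlaneGeometry.

Theorem proposition4p2 (R : rcfType) (A B C Be A0 B0 C0 O0 A' B' C' H' : point R) :
  ~ collinear A B C ->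
  is_bevan_point Be A B C ->
  (* touch points of the A-, B-, C-excircles with lines BC, CA, AB:
     feet of the perpendiculars from the excenters *)
  is_foot A0 (excenterA A B C) B C ->
  is_foot B0 (excenterB A B C) C A ->
  is_foot C0 (excenterC A B C) A B ->
  is_circumcenter O0 A0 B0 C0 ->
  is_foot A' Be A (incenter A B C) ->
  is_foot B' Be B (incenter A B C) ->
  is_foot C' Be C (incenter A B C) ->
  is_orthocenter H' A' B' C' ->
  collinear Be H' O0.
Proof.
move=> ABC.
have [T [p [q [b [u [v [[pq0 u_gt0 v_gt0 uv_gt1] [<- <- <-]]]]]]]] := similar_to_canon ABC.
apply: bevan_collinear_similarity => //; first exact: canon_not_collinear.
exact: canon_bevan_collinear.
Qed.
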